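(* Let $L$ be a multisorted algebra in the positive existential signature satisfying axioms (0), (1), (2), (3), (4), (8). Then there is a set $W$ and an almost morphism $\varphi\colon L\to A(W)$ into the positive existential algebra of $W$ which is injective on each sort.
   Context: The Boolean prime ideal theorem (equivalently, compactness) is assumed. Signature. There is a sort $n$ for each $n\ge0$. For every function $\alpha\colon\{1,\dots,n\}\to\{1,\dots,k\}$ there is a unary function symbol (''substitution'') $\alpha\colon n\to k$ (argument of sort $n$, value of sort $k$). Each sort has $0,1,\vee,\wedge$; for each $n$ there is $\exists\colon n+1\to n$ (positive existential signature). For $\alpha\colon k\to n$, $\beta\colon n\to m$, $\beta\circ\alpha$ is the substitution symbol of the composite function; $\mathrm{id}$ is the identity substitution. The associated cylindrification of $\exists\colon n+1\to n$ is $c\colon n\to n+1$, $c(i)=i$. For a set $W$: $\alpha^{\mathrm{tuple}}(x_1,\dots,x_k)=(x_{\alpha(1)},\dots,x_{\alpha(n)})$, $\alpha^{\mathrm{relation}}(r)=\{\bar x\in W^k:\alpha^{\mathrm{tuple}}(\bar x)\in r\}$. The positive existential algebra $A(W)$ interprets sort $n$ as $\mathcal P(W^n)$, $\alpha$ as $\alpha^{\mathrm{relation}}$, $0,1,\vee,\wedge$ as $\emptyset,W^n,\cup,\cap$, and $\exists(r)=\{\bar x:\exists y\,(\bar x,y)\in r\}$. An almost morphism $\varphi\colon L\to A(W)$ is a sort-preserving family of maps commuting with all substitutions and with $0,1,\vee,\wedge$, and satisfying $\exists(\varphi(r))\subseteq\varphi(\exists(r))$. Partitioning cylindrifications: for $k_1,\dots,k_m$,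 $n=\sum k_j$, the substitutions $c_i\colon k_i\to n$, $c_i(l)=l+\sum_{j<i}k_j$. $x\le y$ (also $y\ge x$) means $x=x\wedge y$. Axioms: (0) For partitioning cylindrifications $c_1,\dots,c_m$ and $r_i,s_i$ of sort $k_i$: if $\bigvee_i c_i(s_i)\ge\bigwedge_i c_i(r_i)$ then $s_i\ge r_i$ for some $i$ (including $m=0$: $0\ge1$ fails in sort $0$). (1) Each sort is a bounded distributive lattice. (2) Substitutions preserve $0,1,\vee,\wedge$. (3) $(\beta\circ\alpha)(r)=\beta(\alpha(r))$. (4) $\mathrm{id}(r)=r$. (8) $r\le c(\exists(r))$. *)

From mathcomp Require Import all_boot.
Set Implicit Arguments. Unset Strict Implicit. Unset Printing Implicit Defensive.

(* Sorts are indexed by n : nat; the set {1,...,n} is rendered as 'I_n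
   (0-indexed). *)
Record PEAlg := {
  car : nat -> Type;
  zero : forall n, car n;
  one : forall n, car n;
  join : forall n, car n -> car n -> car n;
  meet : forall n, car n -> car n -> car n;
  subst : forall n k, {ffun 'I_n -> 'I_k} -> car n -> car k;
  ex : forall n, car n.+1 -> car n
}.

Arguments zero {_ _}. Arguments one {_ _}.
Arguments join {_ _}. Arguments meet {_ _}.
Arguments subst {_ _ _}. Arguments ex {_ _}.

Definition le (L : PEAlg) n (x y : car L n) : Prop := x = meet x y.

Definition compf n k m (beta : {ffun 'I_k -> 'I_m}) (alpha : {ffun 'I_n -> 'I_k})
  : {ffun 'I_n -> 'I_m} := [ffun i => beta (alpha i)].
Definition idf n : {ffun 'I_n -> 'I_n} := [ffun i => i].

Definition cylf n : {ffun 'I_n -> 'I_n.+1} := [ffun i => widen_ord (leqnSn n) i].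

(* partitioning cylindrifications c_i : k_i -> n, c_i(l) = l + sum_{j<i} k_j *)
Definition poff m (k : 'I_m -> nat) (i : 'I_m) : nat := \sum_(j < m | j < i) k j.

Lemma pcyl_subproof m (k : 'I_m -> nat) (i : 'I_m) (l : 'I_(k i)) :
  l + poff k i < \sum_(j < m) k j.
Proof.
rewrite /poff [X in _ < X](bigD1 i) //=.
have H : \sum_(j < m | j < i) k j <= \sum_(j < m | j != i) k j.
  rewrite [X in _ <= X](bigID (fun j : 'I_m => j < i)) /=.
  apply: leq_trans (leq_addr _ _).
  rewrite [X in _ <= X](eq_bigl (fun j : 'I_m => j < i)) //.
  move=> j /=; case: (ltnP j i) => Hj; rewrite ?andbT ?andbF //.
  by apply/eqP => E; rewrite E ltnn in Hj.
by rewrite -addSn; apply: leq_add => //; exact: ltn_ord.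
Qed.

Definition pcyl m (k : 'I_m -> nat) (i : 'I_m) : {ffun 'I_(k i) -> 'I_(\sum_(j < m) k j)} :=
  [ffun l => Ordinal (pcyl_subproof l)].

Definition PEaxioms (L : PEAlg) : Prop :=
  (forall m (k : 'I_m -> nat) (r s : forall i : 'I_m, car L (k i)),
      le (\big[@meet L _ / one]_(i < m) subst (pcyl k i) (r i))
         (\big[@join L _ / zero]_(i < m) subst (pcyl k i) (s i)) ->
      exists i : 'I_m, le (r i) (s i))
  /\ (forall n (x y z : car L n),
        [/\ join x (join y z) = join (join x y) z,
            meet x (meet y z) = meet (meet x y) z,
            join x y = join y x,
            meet x y = meet y x &
          [/\ join x (meet x y) = x,
              meet x (join x y) = x,
              join x zero = x,
              meet x one = x &
              meet x (join y z) = join (meet x y) (meet x z)]])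
  /\ (forall n k (alpha : {ffun 'I_n -> 'I_k}) (x y : car L n),
        [/\ subst alpha (@zero L n) = zero,
            subst alpha (@one L n) = one,
            subst alpha (join x y) = join (subst alpha x) (subst alpha y) &
            subst alpha (meet x y) = meet (subst alpha x) (subst alpha y)])
  /\ (forall k n m (alpha : {ffun 'I_k -> 'I_n}) (beta : {ffun 'I_n -> 'I_m}) (r : car L k),
        subst (compf beta alpha) r = subst beta (subst alpha r))
  /\ (forall n (r : car L n), subst (idf n) r = r)
  /\ (forall n (r : car L n.+1), le r (subst (cylf n) (ex r))).

(* The positive existential algebra A(W): sort n is P(W^n); tuples are
   finite functions 'I_n -> W, relations are predicates on them. *)
Definition tuple_of W n k (alpha : {ffun 'I_n -> 'I_k}) (x : {ffun 'I_k -> W})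
  : {ffun 'I_n -> W} := [ffun i => x (alpha i)].

Definition snoc W n (x : {ffun 'I_n -> W}) (y : W) : {ffun 'I_n.+1 -> W} :=
  [ffun i => match unlift ord_max i with Some j => x j | None => y end].

Definition almost_morphism (L : PEAlg) (W : Type)
  (phi : forall n, car L n -> ({ffun 'I_n -> W} -> Prop)) : Prop :=
  (forall n k (alpha : {ffun 'I_n -> 'I_k}) (r : car L n),
      phi k (subst alpha r) = (fun x => phi n r (tuple_of alpha x)))
  /\ (forall n, phi n zero = (fun _ => False))
  /\ (forall n, phi n one = (fun _ => True))
  /\ (forall n (r s : car L n), phi n (join r s) = (fun x => phi n r x \/ phi n s x))
  /\ (forall n (r s : car L n), phi n (meet r s) = (fun x => phi n r x /\ phi n s x))
  /\ (forall n (r : car L n.+1) (x : {ffun 'I_n -> W}) (y : W),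
        phi n.+1 r (snoc x y) -> phi n (ex r) x).

From Pilot Require Import Defs.
From mathcomp Require Import all_boot.
From mathcomp Require Import boolp classical_sets.
Import Defs. (* classical_sets also exports [one] and [zero] *)
Set Implicit Arguments. Unset Strict Implicit. Unset Printing Implicit Defensive.
Local Open Scope classical_set_scope.

(* A gap is a pair r, s of elements of the same sort with r not below s; it
   comes with a generic tuple of fresh variables, and W is the set of all these
   variables.  A literal is an element of L applied to a tuple of variables, and
   a sequent G |- D of literals is entailed when /\G <= \/D holds in L after
   every renaming of the variables into the coordinates of some sort.  Axiom (0),
   applied to generic tuples placed side by side as partitioning
   cylindrifications, shows that no sequent with left sides r(x_p) of gaps on the
   left and right sides s(x_p) on the right is entailed.  By Zorn's lemma this
   consistent theory extends to a maximal one, which the cut rule makes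
   complete, and phi is truth in it: substitutions and lattice operations are
   respected because their defining (in)equalities are entailed sequents, the
   existential inclusion comes from axiom (8), and a gap r, s is separated at
   its own generic tuple. *)

Lemma tuple_of_cylf_snoc (W : Type) n (x : {ffun 'I_n -> W}) y :
  tuple_of (cylf n) (snoc x y) = x.
Proof.
apply/ffunP => i; rewrite !ffunE.
have -> : widen_ord (leqnSn n) i = lift ord_max i.
  by apply: val_inj; rewrite /= /bump leqNgt ltn_ord.
by rewrite liftK.
Qed.

Section PEAlgebraTheory.
Variable L : PEAlg.
Hypothesis HL : PEaxioms L.

Lemma le_pcyl_bigmeet_bigjoin m (k : 'I_m -> nat) (r s : forall i : 'I_m, car L (k i)) :
  le (\big[@meet L _ / one]_(i < m) subst (pcyl k i) (r i))
     (\big[@join L _ / zero]_(i < m) subst (pcyl k i) (s i)) ->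
  exists i : 'I_m, le (r i) (s i).
Proof. by case: HL => ax0 _; apply: ax0. Qed.

Let lattice_laws n (x y z : car L n) := proj1 (proj2 HL) n x y z.
Let subst_laws n k (a : {ffun 'I_n -> 'I_k}) (x y : car L n) :=
  proj1 (proj2 (proj2 HL)) n k a x y.

Section Lattice.
Variable n : nat.
Implicit Types x y z a b : car L n.

Lemma meetA x y z : meet x (meet y z) = meet (meet x y) z.
Proof. by case: (lattice_laws x y z). Qed.
Lemma joinC x y : join x y = join y x. Proof. by case: (lattice_laws x y x). Qed.
Lemma meetC x y : meet x y = meet y x. Proof. by case: (lattice_laws x y x). Qed.
Lemma joinKI x y : join x (meet x y) = x.
Proof. by case: (lattice_laws x y x) => _ _ _ _ []. Qed.
Lemma meetKU x y : meet x (join x y) = x.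
Proof. by case: (lattice_laws x y x) => _ _ _ _ []. Qed.
Lemma join0 x : join x zero = x. Proof. by case: (lattice_laws x x x) => _ _ _ _ []. Qed.
Lemma meet1 x : meet x one = x. Proof. by case: (lattice_laws x x x) => _ _ _ _ []. Qed.
Lemma meetUr x y z : meet x (join y z) = join (meet x y) (meet x z).
Proof. by case: (lattice_laws x y z) => _ _ _ _ []. Qed.

Lemma meetxx x : meet x x = x. Proof. by rewrite -{2}(joinKI x x) meetKU. Qed.
Lemma meet0x x : meet zero x = zero. Proof. by rewrite -{1}(join0 x) joinC meetKU. Qed.

Lemma le_refl x : le x x. Proof. by rewrite /le meetxx. Qed.
Lemma le_trans y x z : le x y -> le y z -> le x z.
Proof. by rewrite /le => xy yz; rewrite xy -meetA -yz. Qed.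
Lemma le_anti x y : le x y -> le y x -> x = y.
Proof. by rewrite /le => xy yx; rewrite xy meetC -yx. Qed.

Lemma le_meetl x y : le (meet x y) x.
Proof. by rewrite /le [meet _ x]meetC meetA meetxx. Qed.
Lemma le_meetr x y : le (meet x y) y. Proof. by rewrite /le -meetA meetxx. Qed.
Lemma le_meet x y z : le x y -> le x z -> le x (meet y z).
Proof. by rewrite /le => xy xz; rewrite meetA -xy. Qed.
Lemma le_joinl x y : le x (join x y). Proof. by rewrite /le meetKU. Qed.
Lemma le_joinr x y : le y (join x y). Proof. by rewrite joinC; apply: le_joinl. Qed.
Lemma le_join x y z : le x z -> le y z -> le (join x y) z.
Proof. by rewrite /le => xz yz; rewrite meetC meetUr meetC -xz meetC -yz. Qed.
Lemma le_one x : le x one. Proof. by rewrite /le meet1. Qed.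
Lemma le_zero x : le zero x. Proof. by rewrite /le meet0x. Qed.

Lemma le_cut x a b : le (meet x a) b -> le a (join x b) -> le a b.
Proof.
move=> xab axb; apply: le_trans (le_meet (le_refl a) axb) _.
by rewrite meetUr meetC; apply: le_join => //; apply: le_meetr.
Qed.
End Lattice.

Lemma subst0 n k (a : {ffun 'I_n -> 'I_k}) : subst a (@zero L n) = zero.
Proof. by case: (subst_laws a zero zero). Qed.
Lemma subst1 n k (a : {ffun 'I_n -> 'I_k}) : subst a (@one L n) = one.
Proof. by case: (subst_laws a zero zero). Qed.
Lemma substU n k (a : {ffun 'I_n -> 'I_k}) (x y : car L n) :
  subst a (join x y) = join (subst a x) (subst a y).
Proof. by case: (subst_laws a x y). Qed.
Lemma substI n k (a : {ffun 'I_n -> 'I_k}) (x y : car L n) :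
  subst a (meet x y) = meet (subst a x) (subst a y).
Proof. by case: (subst_laws a x y). Qed.
Lemma subst_comp n k m (a : {ffun 'I_n -> 'I_k}) (b : {ffun 'I_k -> 'I_m}) (r : car L n) :
  subst (compf b a) r = subst b (subst a r).
Proof. by case: HL => _ [_ [_ [comp _]]]; apply: comp. Qed.
Lemma le_subst n k (a : {ffun 'I_n -> 'I_k}) (x y : car L n) :
  le x y -> le (subst a x) (subst a y).
Proof. by rewrite /le => xy; rewrite {1}xy substI. Qed.
Lemma le_cylf_ex n (r : car L n.+1) : le r (subst (cylf n) (ex r)).
Proof. by case: HL => _ [_ [_ [_ [_ ax8]]]]; apply: ax8. Qed.

Section BigLattice.
Variables (n : nat) (T : eqType).
Implicit Types (F : T -> car L n) (s : seq T).

Lemma bigmeet_le F s t : t \in s -> le (\big[@meet L n/one]_(x <- s) F x) (F t).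
Proof.
elim: s => //= u s IHs; rewrite inE big_cons => /predU1P[->|/IHs].
  exact: le_meetl.
exact: le_trans (le_meetr _ _).
Qed.
Lemma le_bigmeet F s y :
  (forall t, t \in s -> le y (F t)) -> le y (\big[@meet L n/one]_(x <- s) F x).
Proof.
elim: s => [|u s IHs] yF; first by rewrite big_nil; apply: le_one.
rewrite big_cons; apply: le_meet; first by apply: yF; rewrite mem_head.
by apply: IHs => t ts; apply: yF; rewrite inE ts orbT.
Qed.
Lemma le_bigjoin F s t : t \in s -> le (F t) (\big[@join L n/zero]_(x <- s) F x).
Proof.
elim: s => //= u s IHs; rewrite inE big_cons => /predU1P[->|/IHs].
  exact: le_joinl.
by move/le_trans; apply; apply: le_joinr.
Qed.
Lemma bigjoin_le F s y :
  (forall t, t \in s -> le (F t) y) -> le (\big[@join L n/zero]_(x <- s) F x) y.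
Proof.
elim: s => [|u s IHs] Fy; first by rewrite big_nil; apply: le_zero.
rewrite big_cons; apply: le_join; first by apply: Fy; rewrite mem_head.
by apply: IHs => t ts; apply: Fy; rewrite inE ts orbT.
Qed.

Lemma le_bigmeet_subset F s1 s2 : {subset s1 <= s2} ->
  le (\big[@meet L n/one]_(x <- s2) F x) (\big[@meet L n/one]_(x <- s1) F x).
Proof. by move=> s12; apply: le_bigmeet => t /s12; apply: bigmeet_le. Qed.
Lemma le_bigjoin_subset F s1 s2 : {subset s1 <= s2} ->
  le (\big[@join L n/zero]_(x <- s1) F x) (\big[@join L n/zero]_(x <- s2) F x).
Proof. by move=> s12; apply: bigjoin_le => t /s12; apply: le_bigjoin. Qed.
End BigLattice.

Definition Gap := {classic {n : nat & {rs : car L n * car L n | ~ le rs.1 rs.2}}}.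
Definition arity (p : Gap) : nat := projT1 p.
Definition gap_lhs (p : Gap) : car L (arity p) := (sval (projT2 p)).1.
Definition gap_rhs (p : Gap) : car L (arity p) := (sval (projT2 p)).2.
Lemma gap_nle (p : Gap) : ~ le (gap_lhs p) (gap_rhs p).
Proof. exact: proj2_sig (projT2 p). Qed.

Definition Var := {p : Gap & 'I_(arity p)}.
Definition generic_tuple (p : Gap) : {ffun 'I_(arity p) -> Var} :=
  [ffun i => existT (fun p : Gap => 'I_(arity p)) p i].

Definition Lit := {classic {n : nat & (car L n * {ffun 'I_n -> Var})%type}}.
Definition mk_lit n (r : car L n) (x : {ffun 'I_n -> Var}) : Lit := existT _ n (r, x).
Definition lit_arity (l : Lit) : nat := projT1 l.
Definition lit_rel (l : Lit) : car L (lit_arity l) := (projT2 l).1.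
Definition lit_tuple (l : Lit) : {ffun 'I_(lit_arity l) -> Var} := (projT2 l).2.
Definition lhs_lit (p : Gap) : Lit := mk_lit (gap_lhs p) (generic_tuple p).
Definition rhs_lit (p : Gap) : Lit := mk_lit (gap_rhs p) (generic_tuple p).

Definition eval_lit k (g : Var -> 'I_k) (l : Lit) : car L k :=
  subst [ffun i => g (lit_tuple l i)] (lit_rel l).
Definition meet_lits k (g : Var -> 'I_k) (G : seq Lit) : car L k :=
  \big[@meet L k/one]_(l <- G) eval_lit g l.
Definition join_lits k (g : Var -> 'I_k) (D : seq Lit) : car L k :=
  \big[@join L k/zero]_(l <- D) eval_lit g l.
Definition entails (G D : seq Lit) : Prop :=
  forall k (g : Var -> 'I_k), le (meet_lits g G) (join_lits g D).

Lemma eval_mk_lit k (g : Var -> 'I_k) n (r : car L n) x :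
  eval_lit g (mk_lit r x) = subst [ffun i => g (x i)] r.
Proof. by []. Qed.

Lemma meet_lits1 k (g : Var -> 'I_k) a : meet_lits g [:: a] = eval_lit g a.
Proof. by rewrite /meet_lits big_cons big_nil meet1. Qed.
Lemma join_lits1 k (g : Var -> 'I_k) a : join_lits g [:: a] = eval_lit g a.
Proof. by rewrite /join_lits big_cons big_nil join0. Qed.
Lemma meet_lits2 k (g : Var -> 'I_k) a b :
  meet_lits g [:: a; b] = meet (eval_lit g a) (eval_lit g b).
Proof. by rewrite /meet_lits !big_cons big_nil meet1. Qed.
Lemma join_lits2 k (g : Var -> 'I_k) a b :
  join_lits g [:: a; b] = join (eval_lit g a) (eval_lit g b).
Proof. by rewrite /join_lits !big_cons big_nil join0. Qed.

Lemma entails_weaken G D G' D' : {subset G <= G'} -> {subset D <= D'} ->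
  entails G D -> entails G' D'.
Proof.
move=> GG' DD' GD k g; apply: le_trans (le_bigmeet_subset _ GG') _.
exact: le_trans (GD k g) (le_bigjoin_subset _ DD').
Qed.

Lemma entails_cut l G1 D1 G2 D2 : entails (l :: G1) D1 -> entails G2 (l :: D2) ->
  entails (G1 ++ G2) (D1 ++ D2).
Proof.
have catl (s t : seq Lit) : {subset s <= s ++ t} by move=> x; rewrite mem_cat => ->.
have catr (s t : seq Lit) : {subset t <= s ++ t} by move=> x; rewrite mem_cat orbC => ->.
move=> lGD1 GlD2 k g; apply: (@le_cut _ (eval_lit g l)).
- apply: le_trans (le_bigjoin_subset _ (catl D1 D2)).
  apply: le_trans (lGD1 k g); rewrite /meet_lits big_cons.
  apply: le_meet; first exact: le_meetl.
  exact: le_trans (le_meetr _ _) (le_bigmeet_subset _ (catl G1 G2)).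
- apply: le_trans (le_bigmeet_subset _ (catr G1 G2)) _.
  apply: le_trans (GlD2 k g) _; rewrite /join_lits big_cons.
  apply: le_join; first exact: le_joinl.
  exact: le_trans (le_bigjoin_subset _ (catr D1 D2)) (le_joinr _ _).
Qed.

Section BlockValuation.
Variable ps : seq Gap.

Definition block_arity (i : 'I_(size ps)) : nat := arity (tnth (in_tuple ps) i).
Local Notation N := (\sum_(i < size ps) block_arity i).

Definition block_offset (v : Var) : nat :=
  \sum_(j < size ps | j < index (projT1 v) ps) block_arity j + projT2 v.

(* Lays the generic tuples of the gaps in [ps] side by side in one sort; [h] only
   supplies junk values for the variables of gaps outside [ps]. *)
Definition block_val (h : Var -> 'I_N) (v : Var) : 'I_N := insubd (h v) (block_offset v).

Lemma block_offset_lt v : projT1 v \in ps -> block_offset v < N.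
Proof.
move=> vps; have iv : index (projT1 v) ps < size ps by rewrite index_mem.
have lt : projT2 v < block_arity (Ordinal iv).
  by rewrite /block_arity (tnth_nth (projT1 v)) /= nth_index.
by rewrite /block_offset addnC; exact: pcyl_subproof (Ordinal lt).
Qed.

Hypothesis ps_uniq : uniq ps.

Lemma block_val_generic h i :
  [ffun l => block_val h (generic_tuple (tnth (in_tuple ps) i) l)] = pcyl block_arity i.
Proof.
have idx : index (tnth (in_tuple ps) i) ps = i.
  by rewrite (tnth_nth (tnth (in_tuple ps) i)) index_uniq.
apply/ffunP => l; apply: val_inj; rewrite !ffunE val_insubd /block_offset /= idx addnC.
by rewrite (pcyl_subproof l).
Qed.

Lemma block_val_separates h PG PD : {subset PG <= ps} -> {subset PD <= ps} ->
  ~ le (meet_lits (block_val h) (map lhs_lit PG)) (join_lits (block_val h) (map rhs_lit PD)).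
Proof.
have tnth_of p : p \in ps -> exists i, p = tnth (in_tuple ps) i.
  move=> pps; have ip : index p ps < size ps by rewrite index_mem.
  by exists (Ordinal ip); rewrite (tnth_nth p) nth_index.
move=> PGps PDps GD; pose p i := tnth (in_tuple ps) i.
have [i] : exists i, le (gap_lhs (p i)) (gap_rhs (p i)).
  apply: le_pcyl_bigmeet_bigjoin; apply: le_trans (le_trans _ GD) _.
    apply: le_bigmeet => _ /mapP[_ /PGps /tnth_of[i ->] ->].
    rewrite /lhs_lit eval_mk_lit block_val_generic.
    exact: (bigmeet_le (fun i => subst (pcyl block_arity i) (gap_lhs (p i)))) (mem_index_enum i).
  apply: bigjoin_le => _ /mapP[_ /PDps /tnth_of[i ->] ->].
  rewrite /rhs_lit eval_mk_lit block_val_generic.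
  exact: (le_bigjoin (fun i => subst (pcyl block_arity i) (gap_rhs (p i)))) (mem_index_enum i).
exact: gap_nle.
Qed.
End BlockValuation.

Lemma exists_block_valuation (PS : seq Gap) :
  exists ps (h : Var -> 'I_(\sum_(i < size ps) block_arity i)), uniq ps /\ {subset PS <= ps}.
Proof.
(* A variable must land in a nonempty sort, so if there is one, its gap joins [ps]. *)
have [[v]|noVar] := pselect (inhabited Var).
  have vps : projT1 v \in undup (projT1 v :: PS) by rewrite mem_undup mem_head.
  exists (undup (projT1 v :: PS)), (fun=> Ordinal (block_offset_lt vps)).
  by split=> [|p pPS]; rewrite ?undup_uniq // mem_undup inE pPS orbT.
exists (undup PS), (fun v => False_rect _ (noVar (inhabits v))).
by split=> [|p]; rewrite ?undup_uniq // mem_undup.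
Qed.

Lemma map_preimage (A : Type) (B : eqType) (f : A -> B) (s : seq B) :
  (forall y, y \in s -> exists x, y = f x) -> exists t, s = map f t.
Proof.
elim: s => [|y s IHs] sf; first by exists [::].
have [x ->] := sf y (mem_head y s).
have [t ->] : exists t, s = map f t.
  by apply: IHs => z zs; apply: sf; rewrite inE zs orbT.
by exists (x :: t).
Qed.

Definition consistent (S : set (bool * Lit)) : Prop := forall G D,
  (forall l, l \in G -> S (true, l)) -> (forall l, l \in D -> S (false, l)) -> ~ entails G D.

Definition gap_theory : set (bool * Lit) :=
  [set e | exists p, e = (true, lhs_lit p) \/ e = (false, rhs_lit p)].

Lemma consistent_sub S T : S `<=` T -> consistent T -> consistent S.
Proof. by move=> ST Tcons G D GS DS; apply: Tcons => [l /GS|l /DS]; apply: ST. Qed.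

Lemma consistent_gap_theory : consistent gap_theory.
Proof.
move=> G D GT DT.
have [PG ->] : exists PG, G = map lhs_lit PG.
  by apply: map_preimage => l /GT[p [[->]|//]]; exists p.
have [PD ->] : exists PD, D = map rhs_lit PD.
  by apply: map_preimage => l /DT[p [//|[->]]]; exists p.
have [ps [h [ps_uniq PSps]]] := exists_block_valuation (PG ++ PD).
move=> GD; apply: (block_val_separates ps_uniq (h := h)) (GD _ _) => p pP; apply: PSps.
  by rewrite mem_cat pP.
by rewrite mem_cat pP orbT.
Qed.

Lemma chain_finite_subset (T : eqType) (F : set (set T)) (B : set T) (E : seq T) :
  total_on F subset -> (forall e, e \in E -> ((\bigcup_(X in F) X) `|` B) e) ->
  exists2 X, F X \/ X = set0 & forall e, e \in E -> (X `|` B) e.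
Proof.
move=> Ftot; elim: E => [|e E IHE] EFB; first by exists set0; [right|].
have [X FX EXB] : exists2 X, F X \/ X = set0 & forall e, e \in E -> (X `|` B) e.
  by apply: IHE => e' e'E; apply: EFB; rewrite inE e'E orbT.
have [[Y FY Ye]|eB] := EFB e (mem_head e E); last first.
  by exists X => // e' /predU1P[->|/EXB]; [right|].
case: FX => [FX|X0]; last first.
  by exists Y; [left|move=> e' /predU1P[->|/EXB[]]; [left| rewrite X0|right]].
have [XY|YX] := Ftot X Y FX FY.
  by exists Y; [left|move=> e' /predU1P[->|/EXB[/XY|]]; [left|left|right]].
by exists X; [left|move=> e' /predU1P[->|/EXB//]; left; apply: YX].
Qed.

Lemma exists_maximal_theory : exists S, [/\ consistent S, gap_theory `<=` S &
  forall e, consistent (S `|` [set e]) -> S e].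
Proof.
pose P (A : set (bool * Lit)) := consistent (A `|` gap_theory).
have [F FP Ftot|A [PA Amax]] := @Zorn_bigcup _ P; last first.
  exists (A `|` gap_theory); split=> // e Ae_cons.
  have [Ae|nAe] := pselect (A e); first by left.
  exfalso; apply: (Amax (A `|` [set e])).
    by split=> [x Ax|/(_ e (or_intror erefl))//]; left.
  by apply: consistent_sub Ae_cons => x [[Ax|->]|gx]; [left; left|right|left; right].
move=> G D GF DF GD.
pose E := map (pair true) G ++ map (pair false) D.
have [e|X FX EXB] := @chain_finite_subset _ F gap_theory E Ftot.
  by rewrite mem_cat => /orP[]/mapP[l lGD ->]; [apply: GF|apply: DF].
have PX : P X.
  by case: FX => [/FP//|->]; apply: consistent_sub consistent_gap_theory => e [[]|].
apply: (PX G D _ _ GD) => l lGD; apply: EXB; rewrite mem_cat map_f ?lGD ?orbT //.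
Qed.

Lemma maximal_theory_complete S : consistent S ->
  (forall e, consistent (S `|` [set e]) -> S e) -> forall l, S (true, l) \/ S (false, l).
Proof.
move=> Scons Smax l.
have [/Smax|Tcons] := pselect (consistent (S `|` [set (true, l)])); first by left.
right; apply: Smax => G2 D2 G2S D2S GD2; apply: Tcons => G1 D1 G1S D1S GD1.
pose G1' := [seq g <- G1 | g != l]; pose D2' := [seq d <- D2 | d != l].
have dropl (s : seq Lit) : {subset s <= l :: [seq g <- s | g != l]}.
  by move=> g gs; rewrite inE mem_filter gs andbT orbN.
apply: (Scons (G1' ++ G2) (D1 ++ D2')).
- move=> g; rewrite mem_cat mem_filter => /orP[/andP[gl /G1S[//|[gE]]]|/G2S[//|[] //]].
  by rewrite gE eqxx in gl.
- move=> d; rewrite mem_cat mem_filter => /orP[/D1S[//|[] //]|/andP[dl /D2S[//|[dE]]]].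
  by rewrite dE eqxx in dl.
apply: (@entails_cut l).
  exact: entails_weaken (dropl G1) (fun _ => id) GD1.
exact: entails_weaken (fun _ => id) (dropl D2) GD2.
Qed.

Definition sat (S : set (bool * Lit)) n (r : car L n) (x : {ffun 'I_n -> Var}) : Prop :=
  S (true, mk_lit r x).

Section CompleteTheory.
Variable S : set (bool * Lit).
Hypotheses (S_consistent : consistent S) (S_complete : forall l, S (true, l) \/ S (false, l)).

Lemma entails_true G D : entails G D ->
  (forall l, l \in G -> S (true, l)) -> exists2 d, d \in D & S (true, d).
Proof.
move=> GD GS; apply: contrapT => noD; apply: (S_consistent GS _ GD) => d dD.
by case: (S_complete d) => // Sd; case: noD; exists d.
Qed.

Lemma le_true a b : (forall k (g : Var -> 'I_k), le (eval_lit g a) (eval_lit g b)) ->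
  S (true, a) -> S (true, b).
Proof.
move=> ab Sa; have [||d] := @entails_true [:: a] [:: b].
- by move=> k g; rewrite meet_lits1 join_lits1.
- by move=> l; rewrite inE => /eqP->.
by rewrite inE => /eqP->.
Qed.

Lemma sat_subst n k (a : {ffun 'I_n -> 'I_k}) r x :
  sat S (subst a r) x = sat S r (tuple_of a x).
Proof.
have E k' (g : Var -> 'I_k') :
    eval_lit g (mk_lit (subst a r) x) = eval_lit g (mk_lit r (tuple_of a x)).
  by rewrite !eval_mk_lit -subst_comp; congr subst; apply/ffunP => i; rewrite !ffunE.
by apply: propext; split; apply: le_true => k' g; rewrite E; apply: le_refl.
Qed.

Lemma sat0 n (x : {ffun 'I_n -> Var}) : sat S zero x = False.
Proof.
apply: propext; split=> // Sx; have [||d] := @entails_true [:: mk_lit zero x] [::].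
- by move=> k g; rewrite meet_lits1 eval_mk_lit subst0; apply: le_zero.
- by move=> l; rewrite inE => /eqP->.
by [].
Qed.

Lemma sat1 n (x : {ffun 'I_n -> Var}) : sat S one x = True.
Proof.
apply: propext; split=> // _; have [||d] := @entails_true [::] [:: mk_lit one x] => //.
- by move=> k g; rewrite join_lits1 eval_mk_lit subst1; apply: le_one.
by rewrite inE => /eqP->.
Qed.

Lemma satU n (r s : car L n) x : sat S (join r s) x = (sat S r x \/ sat S s x).
Proof.
apply: propext; split=> [Srs|[] Sr]; last 2 first.
- by apply: le_true Sr => k g; rewrite !eval_mk_lit substU; apply: le_joinl.
- by apply: le_true Sr => k g; rewrite !eval_mk_lit substU; apply: le_joinr.
have [||d] := @entails_true [:: mk_lit (join r s) x] [:: mk_lit r x; mk_lit s x].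
- by move=> k g; rewrite meet_lits1 join_lits2 !eval_mk_lit substU; apply: le_refl.
- by move=> l; rewrite inE => /eqP->.
by rewrite !inE => /orP[]/eqP->; [left|right].
Qed.

Lemma satI n (r s : car L n) x : sat S (meet r s) x = (sat S r x /\ sat S s x).
Proof.
apply: propext; split=> [Srs|[Sr Ss]].
  by split; apply: le_true Srs => k g; rewrite !eval_mk_lit substI;
    [apply: le_meetl|apply: le_meetr].
have [||d] := @entails_true [:: mk_lit r x; mk_lit s x] [:: mk_lit (meet r s) x].
- by move=> k g; rewrite meet_lits2 join_lits1 !eval_mk_lit substI; apply: le_refl.
- by move=> l; rewrite !inE => /orP[]/eqP->.
by rewrite inE => /eqP->.
Qed.

Lemma sat_ex n (r : car L n.+1) x y : sat S r (snoc x y) -> sat S (ex r) x.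
Proof.
move=> Sr; have : sat S (subst (cylf n) (ex r)) (snoc x y).
  by apply: le_true Sr => k g; rewrite !eval_mk_lit; apply/le_subst/le_cylf_ex.
by rewrite sat_subst tuple_of_cylf_snoc.
Qed.

Lemma sat_almost_morphism : almost_morphism (sat S).
Proof.
split; [|split; [|split; [|split; [|split]]]].
- by move=> n k a r; apply: funext => x; apply: sat_subst.
- by move=> n; apply: funext => x; apply: sat0.
- by move=> n; apply: funext => x; apply: sat1.
- by move=> n r s; apply: funext => x; apply: satU.
- by move=> n r s; apply: funext => x; apply: satI.
exact: sat_ex.
Qed.

Hypothesis S_gaps : gap_theory `<=` S.

Lemma sat_separates n (r s : car L n) : ~ le r s -> sat S r <> sat S s.
Proof.
move=> rs Ers; pose p : Gap := existT _ n (exist _ (r, s) rs).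
have Ss : sat S s (generic_tuple p).
  by rewrite -Ers; apply: S_gaps; exists p; left.
have nSs : S (false, rhs_lit p) by apply: S_gaps; exists p; right.
apply: (S_consistent (G := [:: rhs_lit p]) (D := [:: rhs_lit p])).
- by move=> l; rewrite inE => /eqP->.
- by move=> l; rewrite inE => /eqP->.
by move=> k g; rewrite meet_lits1 join_lits1; apply: le_refl.
Qed.

Lemma sat_injective n : injective (@sat S n).
Proof.
move=> r s Ers; apply: le_anti; apply: contrapT => nle.
  exact: sat_separates nle Ers.
exact: sat_separates nle (esym Ers).
Qed.
End CompleteTheory.
End PEAlgebraTheory.

Theorem lemma4p10 (L : PEAlg) (HL : PEaxioms L) :
  exists (W : Type) (phi : forall n, car L n -> ({ffun 'I_n -> W} -> Prop)),
    almost_morphism phi /\ (forall n, injective (phi n)).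
Proof.
have [S [S_consistent S_gaps S_maximal]] := exists_maximal_theory HL.
have S_complete := maximal_theory_complete HL S_consistent S_maximal.
exists (Var L), (sat S); split; first exact: sat_almost_morphism.
by move=> n; apply: sat_injective.
Qed.
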